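(* MWL is strictly more expressive than WL: every WL query is expressible in MWL, but the query ''there are two paths of different lengths from a given node $s$ to a given node $t$'' is expressible in MWL and not in WL.
   Context: Data graphs. Fix a finite alphabet $\Sigma$ and infinite data domains $\mathcal D_{\mathrm{id}}$ and $\mathcal D_{\mathrm{prop}}$. A data graph is $G=(V,E,\mathrm{id},\mathrm{dataof})$ with $V$ a finite nonempty set of nodes, $E\subseteq V\times\Sigma\times V$, $\mathrm{id}:V\to\mathcal D_{\mathrm{id}}$ injective and $\mathrm{dataof}:V\to\mathcal D_{\mathrm{prop}}$. A path is a sequence $\rho=v_0a_1v_1\cdots a_nv_n$ ($n\ge 0$) with $(v_{i-1},a_i,v_i)\in E$ for all $i$; its length is $n$, its positions are $0,\dots,n$. WL (walk logic). Path variables $\pi,\omega,\dots$ range over paths; each position variable $\ell^\pi$ has a sort $\pi$ and ranges over positions of the path assigned to $\pi$. Atoms: $E_a(\ell^\pi,m^\pi)$ ($m=\ell+1$ and the $m$-th label of the path is $a$); $\ell^\pi<m^\pi$ (same sort only); $\ell^\pi\equiv_{\mathrm{id}} n^\omega$ (the nodes at these positions are equal); $\ell^\pi\equiv_{\mathrm{data}} n^\omega$ (these nodes have equal $\mathrm{dataof}$). Closed under $\neg,\vee,\exists\ell^\pi,\exists\pi$. MWL (multi-path walk logic) is WL extended with atoms $\ell^\pi<n^\omega$ for arbitrary (possibly different) sorts $\pi,\omega$, true iff the position assigned to $\ell^\pi$ is smaller, as an integer, than the position assigned to $n^\omega$. The nodes $s,t$ are given as single-node paths (free path variables constrained to have length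 $0$). *)

From mathcomp Require Import all_boot.
Set Implicit Arguments.
Unset Strict Implicit.
Unset Printing Implicit Defensive.

Section WalkLogic.

Variables (Sigma : finType) (Did Dprop : Type).

Definition infinite_type (D : Type) : Prop :=
  exists f : nat -> D, injective f.

Record DataGraph := {
  node : finType;
  edge : node -> Sigma -> node -> bool;
  idof : node -> Did;
  idof_inj : injective idof;
  dataof : node -> Dprop;
  node_nonempty : 0 < #|node|
}.

(** Paths v0 a1 v1 ... an vn : start node and the list of steps (a_i, v_i). *)
Record gpath (G : DataGraph) := GPath {
  pstart : node G;
  psteps : seq (Sigma * node G)
}.

Fixpoint valid_steps (G : DataGraph) (v : node G) (st : seq (Sigma * node G)) : bool :=
  match st with
  | [::] => true
  | (a, w) :: st' => edge v a w && valid_steps w st'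
  end.

Definition valid_path (G : DataGraph) (p : gpath G) : bool :=
  valid_steps (pstart p) (psteps p).

(** length n of the path; its positions are 0..n *)
Definition plen (G : DataGraph) (p : gpath G) : nat := size (psteps p).

Definition pnode (G : DataGraph) (p : gpath G) (i : nat) : node G :=
  nth (pstart p) (pstart p :: map snd (psteps p)) i.

Definition pend (G : DataGraph) (p : gpath G) : node G :=
  last (pstart p) (map snd (psteps p)).

Definition single (G : DataGraph) (v : node G) : gpath G := GPath v [::].

(** Position variables l^pi are pairs (l, pi): name l, sort pi. *)
Definition posvar := (nat * nat)%type.

(** Syntax of MWL; WL is the fragment where every [FLt] atom has both
    variables of the same sort.
    [FE a pi l m] is E_a(l^pi, m^pi). *)
Inductive form :=
| FE : Sigma -> nat -> nat -> nat -> form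
| FLt : posvar -> posvar -> form
| FEqId : posvar -> posvar -> form
| FEqData : posvar -> posvar -> form
| FNot : form -> form
| FOr : form -> form -> form
| FExPos : posvar -> form -> form
| FExPath : nat -> form -> form.

Fixpoint isWL (phi : form) : bool :=
  match phi with
  | FLt x y => x.2 == y.2
  | FNot f => isWL f
  | FOr f g => isWL f && isWL g
  | FExPos _ f => isWL f
  | FExPath _ f => isWL f
  | _ => true
  end.

(** Well-formedness: every position variable used is in scope, its sort is
    a path variable in scope; quantifying a path variable pi takes all
    position variables of sort pi out of scope (their sort is rebound). *)
Fixpoint wf (Gp : seq nat) (Gl : seq posvar) (phi : form) : bool :=
  match phi with
  | FE _ pi l m => (pi \in Gp) && ((l, pi) \in Gl) && ((m, pi) \in Gl)
  | FLt x y => (x \in Gl) && (y \in Gl)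
  | FEqId x y => (x \in Gl) && (y \in Gl)
  | FEqData x y => (x \in Gl) && (y \in Gl)
  | FNot f => wf Gp Gl f
  | FOr f g => wf Gp Gl f && wf Gp Gl g
  | FExPos x f => (x.2 \in Gp) && wf Gp (x :: Gl) f
  | FExPath pi f => wf (pi :: Gp) [seq x <- Gl | x.2 != pi] f
  end.

Definition updp (G : DataGraph) (rho : nat -> gpath G) (pi : nat) (p : gpath G) :=
  fun w => if w == pi then p else rho w.

Definition updl (sg : posvar -> nat) (x : posvar) (k : nat) :=
  fun y => if y == x then k else sg y.

Fixpoint sat (G : DataGraph) (rho : nat -> gpath G) (sg : posvar -> nat)
    (phi : form) : Prop :=
  match phi with
  | FE a pi l m =>
      sg (m, pi) = (sg (l, pi)).+1 /\
      onth (map fst (psteps (rho pi))) (sg (l, pi)) = Some a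
  | FLt x y => sg x < sg y
  | FEqId x y => pnode (rho x.2) (sg x) = pnode (rho y.2) (sg y)
  | FEqData x y => dataof (pnode (rho x.2) (sg x)) = dataof (pnode (rho y.2) (sg y))
  | FNot f => ~ sat rho sg f
  | FOr f g => sat rho sg f \/ sat rho sg g
  | FExPos x f => exists k, k <= plen (rho x.2) /\ sat rho (updl sg x k) f
  | FExPath pi f => exists p : gpath G, valid_path p /\ sat (updp rho pi p) sg f
  end.

Definition query := forall G : DataGraph, node G -> node G -> Prop.

(** Initial assignment: path variable 0 is s, path variable 1 is t, both as
    single-node paths (other path variables are never free in a
    well-formed closed query formula). *)
Definition init_env (G : DataGraph) (s t : node G) : nat -> gpath G :=
  fun pi => if pi == 0 then single s else single t.

(** Q is expressible in the fragment [frag] (isWL for WL, all formulas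
    for MWL) iff some formula of the fragment, whose only free variables
    are the path variables s (=0) and t (=1), defines Q. *)
Definition expressible (frag : form -> bool) (Q : query) : Prop :=
  exists phi : form,
    [&& frag phi & wf [:: 0; 1] [::] phi] /\
    forall (G : DataGraph) (s t : node G),
      sat (init_env s t) (fun _ => 0) phi <-> Q G s t.

Definition WL_expressible (Q : query) := expressible isWL Q.
Definition MWL_expressible (Q : query) := expressible (fun _ => true) Q.

Definition two_paths_diff_len : query :=
  fun G s t => exists p q : gpath G,
    [/\ valid_path p, valid_path q, pstart p = s, pend p = t &
     [/\ pstart q = s, pend q = t & plen p <> plen q]].

End WalkLogic.

From mathcomp Require Import all_boot zify.
From Stdlib Require Import Classical.
From Stdlib Require Wf_nat.
Set Implicit Arguments. Unset Strict Implicit. Unset Printing Implicit Defensive.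

(* MWL expresses the query by guessing two paths from s to t and comparing
   their last positions, which have different sorts.

   For the converse, let theta(n, m) be the graph made of two directed paths
   from s to t, of lengths n and m.  Every s-t path of theta(N, N) has length
   N, while theta(N, N+1) has s-t paths of lengths N and N+1; yet no WL
   formula of quantifier depth d separates the two graphs once
   N >= 2 * 4^d.  Every path of a theta graph is a segment of one branch, and
   WL compares positions of one path only, so an Ehrenfeucht-Fraisse argument
   for linear orders applies branch by branch: on each branch the marked
   points (ends of paths, positions, ends of the branch) are ordered alike in
   both graphs, at equal distances below a threshold T and at distances at
   least T otherwise.  A new position can be matched at threshold T/2, a new
   path (its two ends) at threshold T/4. *)

(** * Gap equivalence *)

Definition gap_equiv (T a b a' b' : nat) :=
  (b + a' = b' + a /\ b < a + T /\ a < b + T) \/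
  (a + T <= b /\ a' + T <= b') \/ (b + T <= a /\ b' + T <= a').

Lemma gap_equiv_refl T a a' : 0 < T -> gap_equiv T a a a' a'.
Proof. rewrite /gap_equiv; lia. Qed.

Lemma gap_equiv_diag T a b : gap_equiv T a b a b.
Proof. rewrite /gap_equiv; lia. Qed.

Lemma gap_equiv_sym T a b a' b' : gap_equiv T a b a' b' -> gap_equiv T a' b' a b.
Proof. rewrite /gap_equiv; lia. Qed.

Lemma gap_equiv_flip T a b a' b' : gap_equiv T a b a' b' -> gap_equiv T b a b' a'.
Proof. rewrite /gap_equiv; lia. Qed.

Lemma gap_equiv_le T T' a b a' b' : T' <= T -> gap_equiv T a b a' b' -> gap_equiv T' a b a' b'.
Proof. rewrite /gap_equiv; lia. Qed.

Lemma gap_equiv_between T xa xb ya yb x0 :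
  0 < T -> xa <= x0 <= xb -> gap_equiv (2 * T) xa xb ya yb ->
  exists y0, ya <= y0 <= yb /\ forall xu yu,
    gap_equiv (2 * T) xa xu ya yu -> gap_equiv (2 * T) xb xu yb yu ->
    (xu <= x0 -> xu <= xa) -> (x0 <= xu -> xb <= xu) ->
    gap_equiv T x0 xu y0 yu.
Proof.
rewrite /gap_equiv => T0 /andP[ha hb] Dab.
case: (ltnP (x0 - xa) T) => near_a.
  exists (ya + (x0 - xa)); split; first lia.
  move=> xu yu; lia.
case: (ltnP (xb - x0) T) => near_b.
  exists (yb - (xb - x0)); split; first lia.
  move=> xu yu; lia.
exists (ya + T); split; first lia.
move=> xu yu; lia.
Qed.

Definition gap_equiv_on (I : Type) (P : I -> Prop) (x y : I -> nat) (T : nat) :=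
  forall u v, P u -> P v -> gap_equiv T (x u) (x v) (y u) (y v).

Lemma gap_equiv_on_le I (P : I -> Prop) x y T T' :
  T' <= T -> gap_equiv_on P x y T -> gap_equiv_on P x y T'.
Proof. by move=> le D u v Pu Pv; apply: gap_equiv_le le (D u v Pu Pv). Qed.

Lemma gap_equiv_on_sym I (P : I -> Prop) x y T :
  gap_equiv_on P x y T -> gap_equiv_on P y x T.
Proof. by move=> D u v Pu Pv; apply/gap_equiv_sym/D. Qed.

Lemma gap_equiv_on_map I J (P : I -> Prop) (Q : J -> Prop) x y x' y' (f : J -> I) T :
  (forall w, Q w -> [/\ P (f w), x' w = x (f w) & y' w = y (f w)]) ->
  gap_equiv_on P x y T -> gap_equiv_on Q x' y' T.
Proof.
move=> Hf D u v Qu Qv; have [Pu -> ->] := Hf u Qu; have [Pv -> ->] := Hf v Qv.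
exact: D.
Qed.

Lemma exists_least_nat (P : nat -> Prop) :
  (exists n, P n) -> exists n, P n /\ forall k, P k -> n <= k.
Proof.
move=> exP.
have [n [[Pn n_least] _]] := Wf_nat.dec_inh_nat_subset_has_unique_least_element
  P (fun n => classic (P n)) exP.
by exists n; split=> // k /n_least /leP.
Qed.

Lemma exists_argmin_ge I (P : I -> Prop) (x : I -> nat) x0 hi :
  P hi -> x0 <= x hi ->
  exists b, [/\ P b, x0 <= x b & forall u, P u -> x0 <= x u -> x b <= x u].
Proof.
move=> Phi le.
have [v [[b [Pb ge <-]] v_least]] :=
  @exists_least_nat (fun v => exists u, [/\ P u, x0 <= x u & x u = v])
    (ex_intro _ _ (ex_intro _ hi (And3 Phi le erefl))).
by exists b; split=> // u Pu geu; apply: v_least; exists u.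
Qed.

Lemma exists_argmax_le I (P : I -> Prop) (x : I -> nat) x0 lo :
  P lo -> x lo <= x0 ->
  exists a, [/\ P a, x a <= x0 & forall u, P u -> x u <= x0 -> x u <= x a].
Proof.
move=> Plo le.
have [k [[a [Pa lea ea]] k_least]] :=
  @exists_least_nat (fun k => exists u, [/\ P u, x u <= x0 & x u = x0 - k])
    (ex_intro _ (x0 - x lo) (ex_intro _ lo (And3 Plo le (esym (subKn le))))).
exists a; split=> // u Pu leu.
have := k_least (x0 - x u) (ex_intro _ u (And3 Pu leu (esym (subKn leu)))); lia.
Qed.

Definition oext I (x : I -> nat) (x0 : nat) (o : option I) :=
  if o is Some u then x u else x0.
Definition oprop I (P : I -> Prop) (o : option I) :=
  if o is Some u then P u else True.

Lemma gap_equiv_on_extend I (P : I -> Prop) x y T x0 lo hi :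
  0 < T -> P lo -> P hi -> x lo <= x0 <= x hi -> gap_equiv_on P x y (2 * T) ->
  exists y0, y lo <= y0 <= y hi /\
    gap_equiv_on (oprop P) (oext x x0) (oext y y0) T.
Proof.
move=> T0 Plo Phi /andP[le_lo le_hi] D.
have [a [Pa ax0 a_max]] := exists_argmax_le Plo le_lo.
have [b [Pb bx0 b_min]] := exists_argmin_ge Phi le_hi.
have [y0 [yab Hy0]] := gap_equiv_between (ya := y a) (yb := y b) T0
  (introT andP (conj ax0 bx0)) (D a b Pa Pb).
have ylo : y lo <= y a.
  by move: (D lo a Plo Pa) (a_max lo Plo le_lo); rewrite /gap_equiv; lia.
have yhi : y b <= y hi.
  by move: (D b hi Pb Phi) (b_min hi Phi le_hi); rewrite /gap_equiv; lia.
have Hu : forall u, P u -> gap_equiv T x0 (x u) y0 (y u).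
  by move=> u Pu; apply: Hy0; [apply: D | apply: D | apply: a_max | apply: b_min].
exists y0; split; first lia.
case=> [u|] [v|] /= Pu Pv.
- by apply: gap_equiv_le (D u v Pu Pv); lia.
- exact/gap_equiv_flip/Hu.
- exact: Hu.
- exact: gap_equiv_refl.
Qed.

(** * Theta graphs *)

Lemma pend_pnode Sigma Did Dprop (G : DataGraph Sigma Did Dprop) (p : gpath G) :
  pend p = pnode p (plen p).
Proof.
rewrite /pend /pnode /plen.
by have := nth_last (pstart p) (pstart p :: map snd (psteps p)); rewrite /= size_map.
Qed.

Lemma onth_map_fst_const (S : eqType) (T : Type) (c a : S) (s : seq (S * T)) k :
  all (fun st => st.1 == c) s ->
  (onth (map fst s) k = Some a <-> a = c /\ k < size s).
Proof.
elim: s k => [|[x y] s IH] [|k] //=; try by split=> [|[]].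
- by case/andP=> /eqP -> _; split=> [[<-]|[-> _]].
- by case/andP=> _ /IH.
Qed.

Section Theta.
Variables (Sigma : finType) (Did Dprop : Type) (c0 : Sigma) (fid : nat -> Did)
  (fid_inj : injective fid) (d0 : Dprop) (n m : nat).

(* Two directed branches, [true] of length [n] and [false] of length [m],
   sharing source and sink; branch [true] is numbered 0..n and the inner
   nodes of branch [false] are n+1..n+m-1. *)
Definition blen (c : bool) := if c then n else m.

Definition branch_index (c : bool) (j : nat) : nat :=
  if c then j else if j == 0 then 0 else if j == m then n else n + j.

Definition theta_node := 'I_(n + m).-1.+1.

Definition bnode c j : theta_node := inord (branch_index c j).

Definition theta_edge (u : theta_node) (a : Sigma) (v : theta_node) :=
  (a == c0) && [exists c : bool, exists j : 'I_(n + m),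
     [&& j < blen c, bnode c j == u & bnode c j.+1 == v]].

Lemma theta_id_inj : injective (fun v : theta_node => fid (val v)).
Proof. by move=> u v /fid_inj /val_inj. Qed.

Lemma theta_node_nonempty : 0 < #|theta_node|.
Proof. by rewrite card_ord. Qed.

Definition theta : DataGraph Sigma Did Dprop :=
  @Build_DataGraph Sigma Did Dprop theta_node theta_edge _
    theta_id_inj (fun _ => d0) theta_node_nonempty.

Definition theta_source : node theta := bnode true 0.
Definition theta_sink : node theta := bnode true n.

Lemma theta_edgeP (u v : theta_node) a : theta_edge u a v <->
  a = c0 /\ exists c j, [/\ j < blen c, u = bnode c j & v = bnode c j.+1].
Proof.
rewrite /theta_edge; split.
  case/andP=> /eqP -> /existsP [c /existsP [j /and3P[hj /eqP hu /eqP hv]]].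
  by split=> //; exists c, j.
case=> -> [c [j [hj hu hv]]]; rewrite eqxx; apply/existsP; exists c; apply/existsP.
have hj2 : j < n + m by move: hj; rewrite /blen; case: (c); lia.
by exists (Ordinal hj2); rewrite /= hj hu hv !eqxx.
Qed.

Definition on_branch (p : gpath theta) c o :=
  [/\ o + plen p <= blen c,
      forall k, k <= plen p -> pnode p k = bnode c (o + k) &
      all (fun st => st.1 == c0) (psteps p)].

Lemma on_branch_label p c o k a : on_branch p c o ->
  (onth (map fst (psteps p)) k = Some a <-> a = c0 /\ k < plen p).
Proof. by case=> _ _ /onth_map_fst_const. Qed.

Lemma on_branch_single c j : j <= blen c ->
  on_branch (single (G := theta) (bnode c j)) c j.
Proof.
move=> hj; split; rewrite /plen //=; first lia.
by move=> k; rewrite leqn0 => /eqP ->; rewrite addn0.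
Qed.

Lemma on_branch_cons c j w st :
  j < blen c -> on_branch (GPath w st) c j.+1 ->
  on_branch (GPath (G := theta) (bnode c j) ((c0, w) :: st)) c j.
Proof.
rewrite /on_branch /plen /pnode /= => hj [hlen hnode hlab]; split.
- by rewrite addnS -addSn.
- case=> [|k] hk /=; first by rewrite addn0.
  rewrite (set_nth_default w); last by rewrite /= size_map; lia.
  by rewrite hnode ?addSnnS //; lia.
- by rewrite eqxx.
Qed.

Lemma exists_branch_segment c o L : o + L <= blen c ->
  exists p : gpath theta, [/\ valid_path p, on_branch p c o & plen p = L].
Proof.
elim: L o => [|L IH] o hL.
  by exists (single (G := theta) (bnode c o)); split=> //; apply: on_branch_single; lia.
have [[v st] [vp hp lp]] := IH o.+1 (ltac:(lia)).
have hv : v = bnode c o.+1 by case: hp => _ /(_ 0 (leq0n _)); rewrite addn0.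
exists (GPath (G := theta) (bnode c o) ((c0, v) :: st)); split.
- apply/andP; split; last exact: vp.
  by apply/theta_edgeP; split=> //; exists c, o; split=> //; lia.
- by apply: on_branch_cons => //; lia.
- by rewrite /plen /= -lp.
Qed.

Hypotheses (n_gt0 : 0 < n) (m_gt0 : 0 < m).

Lemma bnode_val c j : j <= blen c -> val (bnode c j) = branch_index c j.
Proof.
move=> hj; rewrite /bnode /= inordK // ltnS -subn1.
by move: hj; rewrite /branch_index /blen; case: c; do ?case: eqP; lia.
Qed.

Lemma bnode_eq c j c' j' : j <= blen c -> j' <= blen c' ->
  (bnode c j = bnode c' j') <->
  (c = c' /\ j = j') \/ (j = 0 /\ j' = 0) \/ (j = blen c /\ j' = blen c').
Proof.
move=> hj hj'; have -> : bnode c j = bnode c' j' <-> branch_index c j = branch_index c' j'.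
  by rewrite -!bnode_val //; split=> [->|/val_inj].
by move: hj hj'; rewrite /branch_index /blen; case: c; case: c'; do ?case: eqP; lia.
Qed.

Lemma bnode_surj (v : theta_node) : exists c j, j <= blen c /\ v = bnode c j.
Proof.
have hv : nat_of_ord v < n + m by have := ltn_ord v; lia.
case: (leqP v n) => h.
  by exists true, v; split=> //; apply: val_inj; rewrite bnode_val.
exists false, (v - n); have hj : v - n <= blen false by rewrite /blen; lia.
split=> //; apply: val_inj; rewrite bnode_val // /branch_index /=.
by do ?case: eqP; lia.
Qed.

(* Past the shared source, a node determines its branch, hence its successor. *)
Lemma theta_edge_inner c j a w : 0 < j <= blen c -> theta_edge (bnode c j) a w ->
  [/\ a = c0, j < blen c & w = bnode c j.+1].
Proof.
case/andP=> j_gt0 hj /theta_edgeP [-> [c' [j' [hj' e ->]]]].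
case/(bnode_eq hj (ltnW hj')): e => [[ec ej]|[[j0 _]|[_ e]]].
- by subst c' j'; split.
- by rewrite j0 in j_gt0.
- by rewrite e ltnn in hj'.
Qed.

Lemma valid_steps_on_branch c (st : seq (Sigma * node theta)) j : 0 < j <= blen c ->
  valid_steps (G := theta) (bnode c j) st -> on_branch (GPath (G := theta) (bnode c j) st) c j.
Proof.
elim: st j => [|[a w] st IH] j hj /=; first by move=> _; apply: on_branch_single; lia.
case/andP=> /(theta_edge_inner hj) [-> hlt ->] Hst.
by apply: on_branch_cons => //; apply: IH => //; lia.
Qed.

Lemma valid_path_on_branch (p : gpath theta) :
  valid_path p -> exists c o, on_branch p c o.
Proof.
case: p => v [|[a w] st]; rewrite /valid_path /=.
  by move=> _; have [c [j [hj ->]]] := bnode_surj v; exists c, j; apply: on_branch_single.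
case/andP=> /theta_edgeP [-> [c [j [hj -> ->]]]] Hst.
exists c, j; apply: on_branch_cons => //.
by apply: valid_steps_on_branch => //; lia.
Qed.

End Theta.

(** * The Ehrenfeucht-Fraisse invariant *)

Inductive point :=
| PStart of nat | PEnd of nat | PPos of posvar | PSource of bool | PSink of bool.

Definition in_scope (Gp : seq nat) (Gl : seq posvar) (u : point) : Prop :=
  match u with
  | PStart p | PEnd p => p \in Gp
  | PPos x => x \in Gl
  | PSource _ | PSink _ => True
  end.

Definition point_branch (ch : nat -> bool) (u : point) : bool :=
  match u with
  | PStart p | PEnd p => ch p
  | PPos x => ch x.2
  | PSource c | PSink c => c
  end.

Definition upd (T : Type) (f : nat -> T) (p : nat) (v : T) : nat -> T :=
  fun s => if s == p then v else f s.

Section Matching.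
Variables (Sigma : finType) (Did Dprop : Type) (c0 : Sigma) (fid : nat -> Did)
  (fid_inj : injective fid) (d0 : Dprop).

Local Notation G n m := (theta c0 fid_inj d0 n m).

(* [o p] is the index, on its branch, of the first node of path [p]. *)
Definition coord n m (rho : nat -> gpath (G n m)) (sg : posvar -> nat) (o : nat -> nat)
    (u : point) : nat :=
  match u with
  | PStart p => o p
  | PEnd p => o p + plen (rho p)
  | PPos x => o x.2 + sg x
  | PSource _ => 0
  | PSink c => blen n m c
  end.

Definition matched_by n1 m1 n2 m2 (ch : nat -> bool) (o1 o2 : nat -> nat) T Gp Gl
    (rho1 : nat -> gpath (G n1 m1)) sg1 (rho2 : nat -> gpath (G n2 m2)) sg2 :=
  [/\ forall p, p \in Gp ->
        on_branch (rho1 p) (ch p) (o1 p) /\ on_branch (rho2 p) (ch p) (o2 p),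
      forall x, x \in Gl ->
        [/\ x.2 \in Gp, sg1 x <= plen (rho1 x.2) & sg2 x <= plen (rho2 x.2)] &
      forall c, gap_equiv_on (fun u => in_scope Gp Gl u /\ point_branch ch u = c)
        (coord rho1 sg1 o1) (coord rho2 sg2 o2) T].

Definition matched n1 m1 n2 m2 T Gp Gl (rho1 : nat -> gpath (G n1 m1)) sg1
    (rho2 : nat -> gpath (G n2 m2)) sg2 :=
  exists ch o1 o2, matched_by ch o1 o2 T Gp Gl rho1 sg1 rho2 sg2.

Lemma matched_sym n1 m1 n2 m2 T Gp Gl (rho1 : nat -> gpath (G n1 m1)) sg1
    (rho2 : nat -> gpath (G n2 m2)) sg2 :
  matched T Gp Gl rho1 sg1 rho2 sg2 -> matched T Gp Gl rho2 sg2 rho1 sg1.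
Proof.
case=> ch [o1 [o2 [Hr Hl Hd]]]; exists ch, o2, o1; split.
- by move=> p /Hr [].
- by move=> x /Hl [].
- by move=> c; apply/gap_equiv_on_sym/Hd.
Qed.

Lemma matched_by_le n1 m1 n2 m2 ch o1 o2 T T' Gp Gl
    (rho1 : nat -> gpath (G n1 m1)) sg1 (rho2 : nat -> gpath (G n2 m2)) sg2 :
  T' <= T -> matched_by ch o1 o2 T Gp Gl rho1 sg1 rho2 sg2 ->
  matched_by ch o1 o2 T' Gp Gl rho1 sg1 rho2 sg2.
Proof. by move=> le [Hr Hl Hd]; split=> // c; apply: gap_equiv_on_le le (Hd c). Qed.

Lemma matched_le n1 m1 n2 m2 T T' Gp Gl (rho1 : nat -> gpath (G n1 m1)) sg1
    (rho2 : nat -> gpath (G n2 m2)) sg2 :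
  T' <= T -> matched T Gp Gl rho1 sg1 rho2 sg2 -> matched T' Gp Gl rho1 sg1 rho2 sg2.
Proof. by move=> le [ch [o1 [o2 M]]]; exists ch, o1, o2; apply: matched_by_le le M. Qed.

End Matching.

Section Extension.
Variables (Sigma : finType) (Did Dprop : Type) (c0 : Sigma) (fid : nat -> Did)
  (fid_inj : injective fid) (d0 : Dprop) (n1 m1 n2 m2 : nat).

Local Notation G n m := (theta c0 fid_inj d0 n m).

Lemma matched_extend_pos T Gp Gl (rho1 : nat -> gpath (G n1 m1)) sg1
    (rho2 : nat -> gpath (G n2 m2)) sg2 x k :
  0 < T -> matched (2 * T) Gp Gl rho1 sg1 rho2 sg2 ->
  x.2 \in Gp -> k <= plen (rho1 x.2) ->
  exists k2, k2 <= plen (rho2 x.2) /\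
    matched T Gp (x :: Gl) rho1 (updl sg1 x k) rho2 (updl sg2 x k2).
Proof.
move=> T0 [ch [o1 [o2 [Hr Hl Hd]]]] xp hk.
pose P u := in_scope Gp Gl u /\ point_branch ch u = ch x.2.
have range :
    coord rho1 sg1 o1 (PStart x.2) <= o1 x.2 + k <= coord rho1 sg1 o1 (PEnd x.2).
  by rewrite /= leq_addr leq_add2l.
have [y0 [/andP[y_lo y_hi] D]] := gap_equiv_on_extend T0
  (conj xp erefl : P (PStart x.2)) (conj xp erefl : P (PEnd x.2)) range (Hd (ch x.2)).
exists (y0 - o2 x.2); split; first by move: (y_hi) => /=; lia.
exists ch, o1, o2; split=> //.
  move=> z; rewrite inE /updl; case: eqP => [-> _|_ /= /Hl //].
  by split=> //; move: y_hi => /=; lia.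
move=> c; case: (c =P ch x.2) => [->|ne].
  pose f w := if w is PPos z then if z == x then None else Some w else Some w.
  apply: (gap_equiv_on_map (f := f)) D => -[q|q|z|b|b] [/= Iw Cw] //.
  rewrite /updl; case: (z =P x) => [->|nz] /=.
    by split=> //; move: y_lo => /=; lia.
  by move: Iw; rewrite inE => /predU1P [].
apply: (gap_equiv_on_map (f := id)) (gap_equiv_on_le (leq_pmull _ _) (Hd c)) => //.
case=> [q|q|z|b|b] [/= Iw Cw] //.
rewrite /updl; case: (z =P x) => [ez|nz] /=; first by case: ne; rewrite -Cw ez.
by move: Iw; rewrite inE => /predU1P [].
Qed.

(* In the last hypothesis, [None] stands for the end of the new path and
   [Some None] for its start. *)
Lemma matched_by_update_path ch o1 o2 T Gp Gl (rho1 : nat -> gpath (G n1 m1)) sg1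
    (rho2 : nat -> gpath (G n2 m2)) sg2 p q1 q2 c i j :
  matched_by ch o1 o2 T Gp Gl rho1 sg1 rho2 sg2 ->
  on_branch q1 c i -> on_branch q2 c j ->
  gap_equiv_on (oprop (oprop (fun u =>
      in_scope [seq s <- Gp | s != p] [seq x <- Gl | x.2 != p] u /\ point_branch ch u = c)))
    (oext (oext (coord rho1 sg1 o1) i) (i + plen q1))
    (oext (oext (coord rho2 sg2 o2) j) (j + plen q2)) T ->
  matched_by (upd ch p c) (upd o1 p i) (upd o2 p j) T
    (p :: Gp) [seq x <- Gl | x.2 != p] (updp rho1 p q1) sg1 (updp rho2 p q2) sg2.
Proof.
move=> [Hr Hl Hd] q1c q2c D; split.
- by move=> s; rewrite inE /upd /updp; case: (s =P p) => [-> | _ /Hr].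
- move=> x; rewrite mem_filter /updp => /andP[/negbTE -> /Hl[xp ? ?]].
  by split=> //; rewrite inE xp orbT.
move=> c'; case: (c' =P c) => [->|ne].
  pose f w := match w with
    | PStart s => if s == p then Some None else Some (Some w)
    | PEnd s => if s == p then None else Some (Some w)
    | _ => Some (Some w) end.
  apply: (gap_equiv_on_map (f := f)) D => -[s|s|z|b|b] [/= Iw Cw] //;
    rewrite /f /upd /updp /= in Cw *.
  - case: (s =P p) => [// | /eqP ne_sp]; rewrite (negbTE ne_sp) in Cw.
    by rewrite inE (negbTE ne_sp) in Iw; do 2!split=> //=; rewrite mem_filter ne_sp.
  - case: (s =P p) => [// | /eqP ne_sp]; rewrite (negbTE ne_sp) in Cw.
    by rewrite inE (negbTE ne_sp) in Iw; do 2!split=> //=; rewrite mem_filter ne_sp.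
  - move: (Iw); rewrite {1}mem_filter => /andP[/negbTE zp _].
    by rewrite zp in Cw *; do 2?split.
apply: (gap_equiv_on_map (f := id)) (Hd c') => -[s|s|z|b|b] [/= Iw Cw] //;
  rewrite /upd /updp /= in Cw *.
- case: (s =P p) => [ep|/eqP ne_sp]; first by rewrite ep eqxx in Cw; case: ne.
  by rewrite (negbTE ne_sp) in Cw; rewrite inE (negbTE ne_sp) in Iw.
- case: (s =P p) => [ep|/eqP ne_sp]; first by rewrite ep eqxx in Cw; case: ne.
  by rewrite (negbTE ne_sp) in Cw; rewrite inE (negbTE ne_sp) in Iw.
- move: Iw; rewrite mem_filter => /andP[/negbTE zp zin].
  by rewrite zp in Cw *; do 2?split.
Qed.

Hypotheses (n1_gt0 : 0 < n1) (m1_gt0 : 0 < m1).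

(* The start, then the end, of the new path is placed by an extension step. *)
Lemma matched_extend_path T Gp Gl (rho1 : nat -> gpath (G n1 m1)) sg1
    (rho2 : nat -> gpath (G n2 m2)) sg2 p q1 :
  0 < T -> matched (4 * T) Gp Gl rho1 sg1 rho2 sg2 -> valid_path q1 ->
  exists q2, valid_path q2 /\
    matched T (p :: Gp) [seq x <- Gl | x.2 != p]
      (updp rho1 p q1) sg1 (updp rho2 p q2) sg2.
Proof.
move=> T0 [ch [o1 [o2 M]]] vq1; case: (M) => _ _ Hd.
have [c [i q1c]] := valid_path_on_branch n1_gt0 m1_gt0 vq1; have [q1_le _ _] := q1c.
pose P u := in_scope [seq s <- Gp | s != p] [seq x <- Gl | x.2 != p] u /\
  point_branch ch u = c.
have D1 : gap_equiv_on P (coord rho1 sg1 o1) (coord rho2 sg2 o2) (2 * (2 * T)).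
  have le4 : 2 * (2 * T) <= 4 * T by lia.
  apply: (gap_equiv_on_map (f := id)) (gap_equiv_on_le le4 (Hd c)).
  by case=> [s|s|z|b|b] [/= Iw Cw] //; rewrite mem_filter in Iw; case/andP: Iw.
have i_range : 0 <= i <= blen n1 m1 c by rewrite (leq_trans (leq_addr _ _) q1_le).
have [j [_ D2]] := gap_equiv_on_extend (ltac:(lia) : 0 < 2 * T)
  (conj I erefl : P (PSource c)) (conj I erefl : P (PSink c)) i_range D1.
have end_range : i <= i + plen q1 <= blen n1 m1 c by rewrite leq_addr q1_le.
have [e [/andP[j_e e_le] D3]] := gap_equiv_on_extend T0
  (I : oprop P None) (conj I erefl : oprop P (Some (PSink c))) end_range D2.
have seg : j + (e - j) <= blen n2 m2 c by rewrite subnKC.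
have [q2 [vq2 q2c q2_len]] := exists_branch_segment c0 fid_inj d0 seg.
exists q2; split=> //; exists (upd ch p c), (upd o1 p i), (upd o2 p j).
apply: matched_by_update_path (matched_by_le _ M) q1c q2c _; first lia.
by rewrite q2_len subnKC.
Qed.
End Extension.

(** * WL does not distinguish matched assignments *)

Fixpoint qdepth (Sigma : finType) (f : form Sigma) : nat :=
  match f with
  | FNot g => qdepth g
  | FOr g h => maxn (qdepth g) (qdepth h)
  | FExPos _ g | FExPath _ g => (qdepth g).+1
  | _ => 0
  end.

(* The disjunctions are the right-hand side of [bnode_eq]. *)
Lemma gap_equiv_same_node (B : Prop) T i j l l' i' j' k k' : 0 < T ->
  gap_equiv T 0 i 0 i' -> gap_equiv T 0 j 0 j' ->
  gap_equiv T i l i' k -> gap_equiv T j l' j' k' -> (B -> gap_equiv T i j i' j') ->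
  (B /\ i = j) \/ (i = 0 /\ j = 0) \/ (i = l /\ j = l') ->
  (B /\ i' = j') \/ (i' = 0 /\ j' = 0) \/ (i' = k /\ j' = k').
Proof.
move=> T0 hi hj hil hjl hij [[b e]|[[e1 e2]|[e1 e2]]].
- by left; split=> //; move: (hij b) e; rewrite /gap_equiv; lia.
- by right; left; move: hi hj; rewrite /gap_equiv; lia.
- by right; right; move: hil hjl; rewrite /gap_equiv; lia.
Qed.

Section Invariance.
Variables (Sigma : finType) (Did Dprop : Type) (c0 : Sigma) (fid : nat -> Did)
  (fid_inj : injective fid) (d0 : Dprop) (n1 m1 n2 m2 : nat).

Local Notation G n m := (theta c0 fid_inj d0 n m).

Section Atoms.
Variables (T : nat) (Gp : seq nat) (Gl : seq posvar)
  (rho1 : nat -> gpath (G n1 m1)) (sg1 : posvar -> nat)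
  (rho2 : nat -> gpath (G n2 m2)) (sg2 : posvar -> nat).

Hypothesis matched12 : matched T Gp Gl rho1 sg1 rho2 sg2.

Lemma matched_sat_edge a p l l' : 1 < T -> wf Gp Gl (FE a p l l') ->
  sat rho1 sg1 (FE a p l l') <-> sat rho2 sg2 (FE a p l l').
Proof.
case: matched12 => ch [o1 [o2 [Hr _ Hd]]] T1 /andP[/andP[pin lin] l'in] /=.
have [p1 p2] := Hr p pin; rewrite (on_branch_label _ _ p1) (on_branch_label _ _ p2).
have h1 := Hd (ch p) (PPos (l, p)) (PPos (l', p)) (conj lin erefl) (conj l'in erefl).
have h2 := Hd (ch p) (PPos (l, p)) (PEnd p) (conj lin erefl) (conj pin erefl).
split=> -[e [-> lt]]; move: h1 h2 e lt; rewrite /gap_equiv /= => h1 h2 e lt;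
  (split; [lia | split=> //; lia]).
Qed.

Lemma matched_sat_lt x y : 0 < T -> isWL (@FLt Sigma x y) -> wf Gp Gl (@FLt Sigma x y) ->
  sat rho1 sg1 (@FLt Sigma x y) <-> sat rho2 sg2 (@FLt Sigma x y).
Proof.
case: matched12 => ch [o1 [o2 [_ _ Hd]]] T0.
case: x y => [l p] [l' p'] /= /eqP <- /andP[xin yin].
have := Hd (ch p) (PPos (l, p)) (PPos (l', p)) (conj xin erefl) (conj yin erefl).
by rewrite /gap_equiv /=; lia.
Qed.

Hypotheses (n1_gt0 : 0 < n1) (m1_gt0 : 0 < m1) (n2_gt0 : 0 < n2) (m2_gt0 : 0 < m2).

Lemma matched_sat_eqid x y : 0 < T -> wf Gp Gl (@FEqId Sigma x y) ->
  sat rho1 sg1 (@FEqId Sigma x y) <-> sat rho2 sg2 (@FEqId Sigma x y).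
Proof.
case: matched12 => ch [o1 [o2 [Hr Hl Hd]]] T0 /andP[xin yin] /=.
have [xp bx1 bx2] := Hl x xin; have [yp by1 by2] := Hl y yin.
have [[hx1 px1 _] [hx2 px2 _]] := Hr _ xp; have [[hy1 py1 _] [hy2 py2 _]] := Hr _ yp.
rewrite px1 // py1 // px2 // py2 // !bnode_eq //; try lia.
have z1 := Hd (ch x.2) (PSource (ch x.2)) (PPos x) (conj I erefl) (conj xin erefl).
have z2 := Hd (ch y.2) (PSource (ch y.2)) (PPos y) (conj I erefl) (conj yin erefl).
have l1 := Hd (ch x.2) (PPos x) (PSink (ch x.2)) (conj xin erefl) (conj I erefl).
have l2 := Hd (ch y.2) (PPos y) (PSink (ch y.2)) (conj yin erefl) (conj I erefl).
have b12 : ch x.2 = ch y.2 -> gap_equiv T (o1 x.2 + sg1 x) (o1 y.2 + sg1 y)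
    (o2 x.2 + sg2 x) (o2 y.2 + sg2 y).
  by move=> e; apply: (Hd (ch x.2) (PPos x) (PPos y)); split.
split; apply: (gap_equiv_same_node (T := T)) => //; try exact: gap_equiv_sym.
by move=> e; apply/gap_equiv_sym/b12.
Qed.

End Atoms.

Hypotheses (n1_gt0 : 0 < n1) (m1_gt0 : 0 < m1) (n2_gt0 : 0 < n2) (m2_gt0 : 0 < m2).

Lemma matched_sat (f : form Sigma) : isWL f ->
  forall T Gp Gl (rho1 : nat -> gpath (G n1 m1)) sg1 (rho2 : nat -> gpath (G n2 m2)) sg2,
  2 * 4 ^ qdepth f <= T -> wf Gp Gl f -> matched T Gp Gl rho1 sg1 rho2 sg2 ->
  (sat rho1 sg1 f <-> sat rho2 sg2 f).
Proof.
elim: f => [a p l l'|x y|x y|x y|f IH|f IHf g IHg|x f IH|p f IH] WL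
  T Gp Gl rho1 sg1 rho2 sg2 hT V M.
- have T1 : 1 < T by move: hT => /=; lia.
  exact (matched_sat_edge M T1 V).
- have T0 : 0 < T by move: hT => /=; lia.
  exact (matched_sat_lt M T0 WL V).
- have T0 : 0 < T by move: hT => /=; lia.
  exact (matched_sat_eqid M n1_gt0 m1_gt0 n2_gt0 m2_gt0 T0 V).
- by [].
- by rewrite /= (IH WL _ _ _ _ _ _ _ hT V M).
- case/andP: WL => WLf WLg; case/andP: V => Vf Vg.
  have hTf : 2 * 4 ^ qdepth f <= T.
    by apply: leq_trans hT; rewrite leq_pmul2l // leq_pexp2l // leq_maxl.
  have hTg : 2 * 4 ^ qdepth g <= T.
    by apply: leq_trans hT; rewrite leq_pmul2l // leq_pexp2l // leq_maxr.
  by rewrite /= (IHf WLf _ _ _ _ _ _ _ hTf Vf M) (IHg WLg _ _ _ _ _ _ _ hTg Vg M).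
- case/andP: V => xp V.
  have T0 : 0 < 2 * 4 ^ qdepth f by rewrite muln_gt0 expn_gt0.
  have M2 : matched (2 * (2 * 4 ^ qdepth f)) Gp Gl rho1 sg1 rho2 sg2.
    by apply: matched_le M; move: hT; rewrite /= expnS; lia.
  split=> -[k [hk S]].
    have [k2 [hk2 M']] := matched_extend_pos T0 M2 xp hk.
    by exists k2; split=> //; apply/(IH WL _ _ _ _ _ _ _ (leqnn _) V M').
  have [k1 [hk1 M']] := matched_extend_pos T0 (matched_sym M2) xp hk.
  by exists k1; split=> //; apply/(IH WL _ _ _ _ _ _ _ (leqnn _) V (matched_sym M')).
- have T0 : 0 < 2 * 4 ^ qdepth f by rewrite muln_gt0 expn_gt0.
  have M4 : matched (4 * (2 * 4 ^ qdepth f)) Gp Gl rho1 sg1 rho2 sg2.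
    by apply: matched_le M; move: hT; rewrite /= expnS; lia.
  split=> -[q [vq S]].
    have [q2 [vq2 M']] := matched_extend_path n1_gt0 m1_gt0 p T0 M4 vq.
    by exists q2; split=> //; apply/(IH WL _ _ _ _ _ _ _ (leqnn _) V M').
  have [q1 [vq1 M']] := matched_extend_path n2_gt0 m2_gt0 p T0 (matched_sym M4) vq.
  by exists q1; split=> //; apply/(IH WL _ _ _ _ _ _ _ (leqnn _) V (matched_sym M')).
Qed.

End Invariance.

(** * The separating query *)

Section TwoPathsFormula.
Variables (Sigma : finType) (Did Dprop : Type).

Definition fand (f g : form Sigma) := FNot (FOr (FNot f) (FNot g)).

(* Position variable 9 of each sort is reserved as a bound variable. *)
Definition fis_first (x : posvar) : form Sigma :=
  FNot (FExPos (9, x.2) (@FLt Sigma (9, x.2) x)).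
Definition fis_last (x : posvar) : form Sigma :=
  FNot (FExPos (9, x.2) (@FLt Sigma x (9, x.2))).

(* Paths 2 and 3 run from s (path 0) to t (path 1); their last positions
   are compared across sorts, which is where MWL is needed. *)
Definition two_paths_body : form Sigma :=
  fand (fis_first (0, 2)) (fand (fis_last (1, 2)) (fand (fis_first (0, 3))
  (fand (fis_last (1, 3))
  (fand (@FEqId Sigma (0, 2) (0, 0)) (fand (@FEqId Sigma (1, 2) (0, 1))
  (fand (@FEqId Sigma (0, 3) (0, 0)) (fand (@FEqId Sigma (1, 3) (0, 1))
  (FOr (@FLt Sigma (1, 2) (1, 3)) (@FLt Sigma (1, 3) (1, 2)))))))))).

Definition two_paths_formula : form Sigma :=
  FExPath 2 (FExPath 3 (FExPos (0, 2) (FExPos (1, 2) (FExPos (0, 3) (FExPos (1, 3)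
    (FExPos (0, 0) (FExPos (0, 1) two_paths_body))))))).

Variables (G : DataGraph Sigma Did Dprop) (rho : nat -> gpath G) (sg : posvar -> nat).

Lemma sat_fand f g : sat rho sg (fand f g) <-> sat rho sg f /\ sat rho sg g.
Proof.
split=> [H|[Hf Hg] [] //]; split; apply: NNPP => N; apply: H; by [left|right].
Qed.

Lemma sat_fis_first l p : l != 9 -> sat rho sg (fis_first (l, p)) <-> sg (l, p) = 0.
Proof.
move=> l9; rewrite /= /updl eqxx xpair_eqE (negbTE l9) /=.
split=> [H|-> [k [_ //]]]; apply: NNPP => nz; apply: H; exists 0; split=> //; lia.
Qed.

Lemma sat_fis_last l p : l != 9 ->
  sat rho sg (fis_last (l, p)) <-> plen (rho p) <= sg (l, p).
Proof.
move=> l9; rewrite /= /updl eqxx xpair_eqE (negbTE l9) /=.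
split=> [H|le [k [hk lt]]]; last lia.
apply: NNPP => gt; apply: H; exists (plen (rho p)); split=> //; lia.
Qed.

Lemma sat_two_paths_body : sat rho sg two_paths_body <->
  [/\ sg (0, 2) = 0 /\ plen (rho 2) <= sg (1, 2),
   sg (0, 3) = 0 /\ plen (rho 3) <= sg (1, 3),
   [/\ pnode (rho 2) (sg (0, 2)) = pnode (rho 0) (sg (0, 0)),
       pnode (rho 2) (sg (1, 2)) = pnode (rho 1) (sg (0, 1)),
       pnode (rho 3) (sg (0, 3)) = pnode (rho 0) (sg (0, 0)) &
       pnode (rho 3) (sg (1, 3)) = pnode (rho 1) (sg (0, 1))] &
   sg (1, 2) < sg (1, 3) \/ sg (1, 3) < sg (1, 2)].
Proof.
rewrite /two_paths_body !sat_fand !sat_fis_first // !sat_fis_last //=.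
by split=> [[a [b [c [d [e [f [g [h i]]]]]]]]|[[a b] [c d] [e f g h] i]].
Qed.

End TwoPathsFormula.

Lemma two_paths_formula_wf (Sigma : finType) : wf [:: 0; 1] [::] (two_paths_formula Sigma).
Proof. by []. Qed.

Lemma sat_two_paths_formula (Sigma : finType) (Did Dprop : Type)
    (G : DataGraph Sigma Did Dprop) (s t : node G) :
  sat (init_env s t) (fun _ => 0) (two_paths_formula Sigma) <-> two_paths_diff_len s t.
Proof.
split.
  move=> [p [vp [q [vq [k0 [hk0 [k1 [hk1 [k2 [hk2 [k3 [hk3 [k4 [hk4 [k5 [hk5 H]]]]]]]]]]]]]]]].
  move/sat_two_paths_body: H; move: hk0 hk1 hk2 hk3 hk4 hk5.
  rewrite /updl /updp /init_env /= /plen /=.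
  move=> hk0 hk1 hk2 hk3 hk4 hk5 [[e0 l0] [e1 l1] [ps pt qs qt] d].
  have [? ? ? ?] : [/\ k4 = 0, k5 = 0, k1 = size (psteps p) & k3 = size (psteps q)].
    by split; lia.
  subst; exists p, q; rewrite !pend_pnode.
  by split=> //; split=> //; rewrite /plen; lia.
case=> p [q [vp vq sp ep [sq eq ne]]].
exists p; split=> //; exists q; split=> //.
exists 0; split=> //; exists (plen p); split; first by rewrite /updp /=.
exists 0; split=> //; exists (plen q); split; first by rewrite /updp /=.
exists 0; split=> //; exists 0; split=> //.
apply/sat_two_paths_body; rewrite /updl /updp /init_env /=; split=> //; last lia.
by split; rewrite -?pend_pnode ?ep ?eq // /pnode /= ?sp ?sq.
Qed.

Section Separation.
Variables (Sigma : finType) (Did Dprop : Type) (c0 : Sigma) (fid : nat -> Did)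
  (fid_inj : injective fid) (d0 : Dprop).

Local Notation G n m := (theta c0 fid_inj d0 n m).

Lemma theta_source_sink_plen n m (p : gpath (G n m)) : 0 < n -> 0 < m ->
  valid_path p -> pstart p = theta_source c0 fid_inj d0 n m ->
  pend p = theta_sink c0 fid_inj d0 n m ->
  plen p = n \/ plen p = m.
Proof.
move=> n_gt0 m_gt0 vp sp ep; have [c [o pc]] := valid_path_on_branch n_gt0 m_gt0 vp.
have [p_le p_node _] := pc.
have o0 : o = 0.
  have o_le : o <= blen n m c by lia.
  move: sp; rewrite -[pstart p]/(pnode p 0) p_node // addn0.
  by case/(bnode_eq n_gt0 m_gt0 o_le (leq0n _)) => [[_ ->]|[[-> _]|[_ /= n0]]] //; lia.
subst o; have len_le : plen p <= blen n m c by lia.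
move: ep; rewrite pend_pnode p_node // add0n.
have n_le : n <= blen n m true by [].
case/(bnode_eq n_gt0 m_gt0 len_le n_le) => [[_ ->]|[[_ /= n0]|[-> _]]].
- by left.
- lia.
- by case: (c); [left|right].
Qed.

Lemma theta_balanced_no_two_paths N : 0 < N ->
  ~ two_paths_diff_len (theta_source c0 fid_inj d0 N N) (theta_sink c0 fid_inj d0 N N).
Proof.
move=> N_gt0 [p [q [vp vq sp ep [sq eq ne]]]]; apply: ne.
by case: (theta_source_sink_plen N_gt0 N_gt0 vp sp ep) => ->;
  case: (theta_source_sink_plen N_gt0 N_gt0 vq sq eq) => ->.
Qed.

Lemma theta_unbalanced_two_paths N : 0 < N ->
  two_paths_diff_len (theta_source c0 fid_inj d0 N N.+1) (theta_sink c0 fid_inj d0 N N.+1).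
Proof.
move=> N_gt0.
have [p [vp [_ p_node _] lp]] :=
  exists_branch_segment c0 fid_inj d0 (leqnn (0 + N) : _ <= blen N N.+1 true).
have [q [vq [_ q_node _] lq]] :=
  exists_branch_segment c0 fid_inj d0 (leqnn (0 + N.+1) : _ <= blen N N.+1 false).
exists p, q; split=> //.
- exact: (p_node 0).
- by rewrite pend_pnode p_node ?lp.
split.
- exact: (q_node 0).
- rewrite pend_pnode q_node ?lq //.
  have N_le : N <= blen N N.+1 true by [].
  by apply/(bnode_eq N_gt0 (ltn0Sn N) (leqnn _) N_le); right; right.
- by rewrite lp lq; lia.
Qed.

Lemma matched_init N T : 0 < N -> T <= N ->
  matched T [:: 0; 1] [::]
    (init_env (theta_source c0 fid_inj d0 N N) (theta_sink c0 fid_inj d0 N N)) (fun _ => 0)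
    (init_env (theta_source c0 fid_inj d0 N N.+1) (theta_sink c0 fid_inj d0 N N.+1))
    (fun _ => 0).
Proof.
move=> N_gt0 TN; pose o p := if p == 0 then 0 else N.
exists (fun _ => true), o, o; split=> //.
  move=> p; rewrite !inE => /orP[] /eqP ->;
    by split; apply: on_branch_single; rewrite /blen.
case=> u v [Iu Cu] [Iv Cv].
  suff E : forall w, point_branch (fun _ => true) w ->
      coord (init_env (theta_source c0 fid_inj d0 N N) (theta_sink c0 fid_inj d0 N N))
        (fun _ => 0) o w =
      coord (init_env (theta_source c0 fid_inj d0 N N.+1) (theta_sink c0 fid_inj d0 N N.+1))
        (fun _ => 0) o w.
    by rewrite (E u) ?Cu // (E v) ?Cv //; apply: gap_equiv_diag.
  by case=> [p|p|x|b|[]] //= _; rewrite /plen /init_env; case: (p == 0).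
have F : forall w, in_scope [:: 0; 1] [::] w -> point_branch (fun _ => true) w = false ->
    w = PSource false \/ w = PSink false by case=> [p|p|x|[]|[]] //= _ _; [left|right].
by case: (F u Iu Cu) => ->; case: (F v Iv Cv) => ->; rewrite /gap_equiv /= /blen; lia.
Qed.
End Separation.

Theorem mainTheorem15 (Sigma : finType) (Did Dprop : Type) :
  0 < #|Sigma| -> infinite_type Did -> infinite_type Dprop ->
  (forall Q : query Sigma Did Dprop, WL_expressible Q -> MWL_expressible Q) /\
  MWL_expressible (@two_paths_diff_len Sigma Did Dprop) /\
  ~ WL_expressible (@two_paths_diff_len Sigma Did Dprop).
Proof.
move=> /card_gt0P [c0 _] [fid fid_inj] [data _].
split; first by move=> Q [phi [/andP[_ V] H]]; exists phi; split=> //; rewrite V.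
split.
  exists (two_paths_formula Sigma); split; first exact: two_paths_formula_wf.
  exact: sat_two_paths_formula.
case=> phi [/andP[WL V] Hphi]; pose N := 2 * 4 ^ qdepth phi.
have N_gt0 : 0 < N by rewrite muln_gt0 expn_gt0.
have M := matched_init c0 fid_inj (data 0) N_gt0 (leqnn N).
have E := matched_sat N_gt0 N_gt0 N_gt0 (ltn0Sn N) WL (leqnn N) V M.
apply: (theta_balanced_no_two_paths (c0 := c0) (fid_inj := fid_inj) (d0 := data 0) N_gt0).
by apply/Hphi/E/Hphi; apply: theta_unbalanced_two_paths.
Qed.
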